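(* Let $\mathcal A,\mathcal B$ be typoids with $\mathcal B$ univalent. Let $f:A\to B$ be a typoid function from $\mathcal A$ to $\mathcal B$ with 1-associate $\Phi_f$. Let $\mathrm{IdtoEqv}_{\mathcal A}$ be a 1-associate of $\mathrm{id}_A$, viewed as a typoid function from $\mathcal A_0$ to $\mathcal A$, with respect to which $\mathrm{id}_A$ is strict (for example $\mathrm{idtoEqv}_{\mathcal A}$). Then for all $x,y:A$ and $p:x=_Ay$ there is a term of type $$\mathrm{Ua}_{\mathcal B}\big(f(x),f(y),\Phi_f(x,y,\mathrm{IdtoEqv}_{\mathcal A}(x,y,p))\big)=\mathrm{ap}_f(x,y,p).$$
   Context: We work in intensional Martin-Löf type theory with a universe $\mathcal U$ (univalent type theory as in the HoTT book). A (2-)typoid $\mathcal A=(A,\simeq_{\mathcal A},\mathrm{eqv}_{\mathcal A},\ast_{\mathcal A},{}^{-1_{\mathcal A}},\cong_{\mathcal A})$ consists of the following data: - a type $A:\mathcal U$; - a type family $\simeq_{\mathcal A}:A\to A\to\mathcal U$; - a dependent function $\mathrm{eqv}:\prod_{x:A}x\simeq x$, whose values are written $\mathrm{eqv}_x$; - a composition $\ast:\prod_{x,y,z:A}(x\simeq y)\to(y\simeq z)\to(x\simeq z)$, written infix; - an inversion ${}^{-1}:\prod_{x,y:A}(x\simeq y)\to(y\simeq x)$; - a family $\cong:\prod_{x,y:A}(x\simeq y)\to(x\simeq y)\to\mathcal U$ which, for each $x,y$, is an equivalence relation on $x\simeq y$, with reflexivity, symmetry and transitivity witnessed by terms. These are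 required to satisfy the following. For all $x,y,z,w:A$, $e,e_1,d_1:x\simeq y$, $e_2,d_2:y\simeq z$ and $e_3:z\simeq w$, there are terms of the types: - (Typ1) $\mathrm{eqv}_x\ast e\cong e$ and $e\ast\mathrm{eqv}_y\cong e$; - (Typ2) $e\ast e^{-1}\cong\mathrm{eqv}_x$ and $e^{-1}\ast e\cong\mathrm{eqv}_y$; - (Typ3) $(e_1\ast e_2)\ast e_3\cong e_1\ast(e_2\ast e_3)$; - (Typ4) $(e_1\cong d_1)\to(e_2\cong d_2)\to(e_1\ast e_2\cong d_1\ast d_2)$. Subscripts are omitted when clear. If $\mathcal A,\mathcal B$ are typoids, a function $f:A\to B$ is a typoid function from $\mathcal A$ to $\mathcal B$ if there are dependent functions - $\Phi_f:\prod_{x,y:A}(x\simeq_{\mathcal A}y)\to(f(x)\simeq_{\mathcal B}f(y))$, called a 1-associate of $f$, and - $\Phi^2_f:\prod_{x,y:A}\prod_{e,d:x\simeq_{\mathcal A}y}(e\cong_{\mathcal A}d)\to(\Phi_f(x,y,e)\cong_{\mathcal B}\Phi_f(x,y,d))$, called a 2-associate with respect to $\Phi_f$, such that for all $x,y,z:A$, $e_1:x\simeq_{\mathcal A}y$ and $e_2:y\simeq_{\mathcal A}z$ there are terms of the types: - (i) $\Phi_f(x,x,\mathrm{eqv}_x)\cong_{\mathcal B}\mathrm{eqv}_{f(x)}$; - (ii) $\Phi_f(x,z,e_1\ast_{\mathcal A}e_2)\cong_{\mathcal B}\Phi_f(x,y,e_1)\ast_{\mathcal B}\Phi_f(y,z,e_2)$.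 The function $f$ is strict with respect to $\Phi_f$ if $\Phi_f(x,x,\mathrm{eqv}_x)\equiv\mathrm{eqv}_{f(x)}$ holds judgmentally for every $x:A$. For a typoid $\mathcal A$, the equality typoid $\mathcal A_0$ has underlying type $A$ and: - $x\simeq y:\equiv(x=_Ay)$; - $\mathrm{eqv}_x:\equiv\mathrm{refl}_x$; - $\ast$ is path concatenation and ${}^{-1}$ is path inversion; - $p\cong q:\equiv(p=_{x=_Ay}q)$. A typoid $\mathcal A$ is univalent if there are: - (a) a dependent function $\mathrm{IdtoEqv}_{\mathcal A}:\prod_{x,y:A}(x=_Ay)\to(x\simeq_{\mathcal A}y)$ which is a 1-associate (with some 2-associate $\mathrm{IdtoEqv}^2_{\mathcal A}$) making $\mathrm{id}_A$ a typoid function from $\mathcal A_0$ to $\mathcal A$, and with respect to which $\mathrm{id}_A$ is strict, i.e. $\mathrm{IdtoEqv}_{\mathcal A}(x,x,\mathrm{refl}_x)\equiv\mathrm{eqv}_x$; - (b) dependent functions $\mathrm{Ua}_{\mathcal A}:\prod_{x,y:A}(x\simeq_{\mathcal A}y)\to(x=_Ay)$ and $\mathrm{Ua}^2_{\mathcal A}:\prod_{x,y:A}\prod_{e,d:x\simeq_{\mathcal A}y}(e\cong_{\mathcal A}d)\to(\mathrm{Ua}_{\mathcal A}(x,y,e)=\mathrm{Ua}_{\mathcal A}(x,y,d))$, such that for all $x,y:A$, $p:x=_Ay$ and $e:x\simeq_{\mathcal A}y$ there are terms of types $\mathrm{Ua}_{\mathcal A}(x,y,\mathrm{IdtoEqv}_{\mathcal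 A}(x,y,p))=p$ and $\mathrm{IdtoEqv}_{\mathcal A}(x,y,\mathrm{Ua}_{\mathcal A}(x,y,e))\cong_{\mathcal A}e$. It is strictly univalent if moreover $\mathrm{Ua}_{\mathcal A}(x,x,\mathrm{eqv}_x)\equiv\mathrm{refl}_x$ judgmentally for all $x:A$. For a typoid $\mathcal A$, define $\mathrm{idtoEqv}_{\mathcal A}(x,y,p):\equiv p_*^{P_x}(\mathrm{eqv}_x)$, which is transport along $p:x=_Ay$ in the family $P_x(z):\equiv x\simeq_{\mathcal A}z$. $\mathrm{ap}_f:\prod_{x,y:A}(x=_Ay)\to(f(x)=_Bf(y))$ is the usual action of $f$ on paths. *)

Record Typoid : Type := {
  carrier :> Type;
  teq : carrier -> carrier -> Type;
  eqv : forall x, teq x x;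
  tcomp : forall x y z, teq x y -> teq y z -> teq x z;
  tinv : forall x y, teq x y -> teq y x;
  t2 : forall x y, teq x y -> teq x y -> Type;
  t2_refl : forall x y (e : teq x y), t2 x y e e;
  t2_sym : forall x y (e d : teq x y), t2 x y e d -> t2 x y d e;
  t2_trans : forall x y (e d c : teq x y), t2 x y e d -> t2 x y d c -> t2 x y e c;
  typ1l : forall x y (e : teq x y), t2 x y (tcomp x x y (eqv x) e) e;
  typ1r : forall x y (e : teq x y), t2 x y (tcomp x y y e (eqv y)) e;
  typ2l : forall x y (e : teq x y), t2 x x (tcomp x y x e (tinv x y e)) (eqv x);
  typ2r : forall x y (e : teq x y), t2 y y (tcomp y x y (tinv x y e) e) (eqv y);
  typ3 : forall x y z w (e1 : teq x y) (e2 : teq y z) (e3 : teq z w),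
      t2 x w (tcomp x z w (tcomp x y z e1 e2) e3) (tcomp x y w e1 (tcomp y z w e2 e3));
  typ4 : forall x y z (e1 d1 : teq x y) (e2 d2 : teq y z),
      t2 x y e1 d1 -> t2 y z e2 d2 -> t2 x z (tcomp x y z e1 e2) (tcomp x y z d1 d2)
}.

Arguments teq {_} _ _.
Arguments eqv {_} _.
Arguments tcomp {_} {_ _ _} _ _.
Arguments tinv {_} {_ _} _.
Arguments t2 {_} {_ _} _ _.

Record is_typoid_fun (A B : Typoid) (f : A -> B)
    (Phi : forall x y : A, teq x y -> teq (f x) (f y)) : Type := {
  Phi2 : forall (x y : A) (e d : teq x y), t2 e d -> t2 (Phi x y e) (Phi x y d);
  tf_eqv : forall x : A, t2 (Phi x x (eqv x)) (eqv (f x));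
  tf_comp : forall (x y z : A) (e1 : teq x y) (e2 : teq y z),
      t2 (Phi x z (tcomp e1 e2)) (tcomp (Phi x y e1) (Phi y z e2))
}.

Definition eqTypoid (A : Typoid) : Typoid.
Proof.
  refine (@Build_Typoid (carrier A) (fun x y => x = y) (fun x => eq_refl)
            (fun x y z p q => eq_trans p q) (fun x y p => eq_sym p)
            (fun x y p q => p = q)
            (fun x y e => eq_refl)
            (fun x y e d h => eq_sym h)
            (fun x y e d c h k => eq_trans h k) _ _ _ _ _ _).
  - intros x y e; destruct e; reflexivity.
  - intros x y e; destruct e; reflexivity.
  - intros x y e; destruct e; reflexivity.
  - intros x y e; destruct e; reflexivity.
  - intros x y z w e1 e2 e3; destruct e1, e2, e3; reflexivity.
  - intros x y z e1 d1 e2 d2 h k; destruct h, k; reflexivity.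
Defined.

(** Univalent typoid. Judgmental strictness of IdtoEqv is rendered as a
    propositional equality. *)
Record is_univalent (B : Typoid) : Type := {
  IdtoEqv : forall x y : B, x = y -> teq x y;
  IdtoEqv_fun : is_typoid_fun (eqTypoid B) B (fun x => x) IdtoEqv;
  IdtoEqv_strict : forall x : B, IdtoEqv x x eq_refl = eqv x;
  Ua : forall x y : B, teq x y -> x = y;
  Ua2 : forall (x y : B) (e d : teq x y), t2 e d -> Ua x y e = Ua x y d;
  Ua_IdtoEqv : forall (x y : B) (p : x = y), Ua x y (IdtoEqv x y p) = p;
  IdtoEqv_Ua : forall (x y : B) (e : teq x y), t2 (IdtoEqv x y (Ua x y e)) e
}.

Arguments IdtoEqv {_} _ _ _ _.
Arguments Ua {_} _ _ _ _.


Lemma Ua_eqv (B : Typoid) (UB : is_univalent B) (b : B) :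
  Ua UB b b (eqv b) = eq_refl.
Proof.
  rewrite <- (IdtoEqv_strict B UB b).
  apply Ua_IdtoEqv.
Qed.

Theorem mainTheorem11 (A B : Typoid) (UB : is_univalent B) (f : A -> B)
  (Phi : forall x y : A, teq x y -> teq (f x) (f y))
  (Hf : is_typoid_fun A B f Phi)
  (IdtoEqvA : forall x y : A, x = y -> teq x y)
  (HIdA : is_typoid_fun (eqTypoid A) A (fun x => x) IdtoEqvA)
  (HIdA_strict : forall x : A, IdtoEqvA x x eq_refl = eqv x)
  (x y : A) (p : x = y) :
  Ua UB (f x) (f y) (Phi x y (IdtoEqvA x y p)) = f_equal f p.
Proof.
  destruct p; simpl.
  rewrite HIdA_strict.
  rewrite (Ua2 B UB _ _ _ _ (tf_eqv _ _ _ _ Hf x)).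
  apply Ua_eqv.
Qed.
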